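(* Let $\Gamma$ be any messageless secret-key code over the alphabet $\{0,1\}$ with codeword space $\{0,1\}^n$, $n\ge 1$, and let $\delta\in(0,1)$. If $\Gamma$ satisfies $\mathcal{F}^{\mathrm{ind}}_{\alpha n}$-tamper detection for $\alpha=(1+\delta)/2$, then $\Gamma$ does not satisfy soundness.
   Context: A messageless secret-key code over alphabet $\Sigma$ with codeword space $\Sigma^n$ is a triple of polynomial-time algorithms $\Gamma=(\mathsf{KGen},\mathsf{Enc},\mathsf{Dec})$: $\mathsf{KGen}(1^\lambda)$ is randomized and outputs a secret key $sk$; $\mathsf{Enc}(sk)$ (possibly randomized) outputs a codeword $\gamma\in\Sigma^n$; $\mathsf{Dec}(sk,\gamma)$ is deterministic and outputs one of $\mathtt{valid},\mathtt{invalid},\mathtt{tampered}$. A function $\nu(\lambda)$ is negligible, written $\mathsf{negl}(\lambda)$, if $\nu(\lambda)=o(\lambda^{-c})$ for every $c>0$. Soundness: for every fixed $\hat\gamma\in\Sigma^n$, $\Pr[\mathsf{Dec}(sk,\hat\gamma)\neq\mathtt{invalid} : sk\leftarrow\mathsf{KGen}(1^\lambda)]\le\mathsf{negl}(\lambda)$. $\mathcal{F}$-tamper detection, for a family $\mathcal{F}$ of (possibly randomized) functions $f:\Sigma^n\to\Sigma^n$: for every $f\in\mathcal{F}$, $\Pr[\mathsf{Dec}(sk,\tilde\gamma)\neq\mathtt{tampered}\wedge\tilde\gamma\neq\gamma : sk\leftarrow\mathsf{KGen}(1^\lambda);\ \gamma\leftarrow\mathsf{Enc}(sk);\ \tilde\gamma\leftarrow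 f(\gamma)]\le\mathsf{negl}(\lambda)$. $\mathcal{F}^{\mathrm{ind}}_{\alpha n}$ denotes the family of independent-tampering functions with rate $\alpha$: randomized length-preserving maps $f:\Sigma^n\to\Sigma^n$ that act independently on each coordinate, each coordinate being modified with probability at most $\alpha$. In particular (for $\Sigma=\{0,1\}$) it contains the map that, independently for each position $i$, replaces $\gamma_i$ by a uniformly random bit with probability $1/2$ and leaves it unchanged with probability $1/2$. *)

(* Probabilities are real numbers in an
   arbitrary realType R; all randomized algorithms are modelled as finitely
   supported distributions (finite sample spaces). *)
From HB Require Import structures.
From mathcomp Require Import all_boot all_order all_algebra.
From mathcomp Require Import all_classical all_reals.
From mathcomp Require Import exp.
Set Implicit Arguments. Unset Strict Implicit. Unset Printing Implicit Defensive.
Import Order.TTheory GRing.Theory Num.Theory.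
Local Open Scope ring_scope.

Definition word (m : nat) := {ffun 'I_m -> bool}.

Definition is_distr (R : realType) (T : finType) (p : T -> R) : Prop :=
  (forall t, 0 <= p t) /\ \sum_(t : T) p t = 1.

Inductive outcome := valid | invalid | tampered.

Definition is_tampered (o : outcome) : bool := if o is tampered then true else false.
Definition is_invalid (o : outcome) : bool := if o is invalid then true else false.

Definition negl (R : realType) (nu : nat -> R) : Prop :=
  forall c : R, 0 < c -> forall eps : R, 0 < eps ->
    exists N : nat, forall lam : nat, (N <= lam)%N ->
      `|nu lam| <= eps * ((lam%:R : R) `^ (- c)).

(* A messageless secret-key code over {0,1} with codeword length n lam, key
   space K lam, key generation distribution kgen lam, (randomized) encoder
   enc lam sk (a distribution on codewords) and deterministic decoder. *)
Record mlcode (R : realType) := MLCode {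
  clen : nat -> nat;
  ckey : nat -> finType;
  ckgen : forall lam, ckey lam -> R;
  cenc : forall lam, ckey lam -> word (clen lam) -> R;
  cdec : forall lam, ckey lam -> word (clen lam) -> outcome
}.

Definition well_formed (R : realType) (G : mlcode R) : Prop :=
  forall lam, is_distr (@ckgen R G lam) /\
              forall sk, is_distr (@cenc R G lam sk).

Definition sound (R : realType) (G : mlcode R) : Prop :=
  forall hat : forall lam, word (clen G lam),
    negl (fun lam => \sum_(sk : ckey G lam)
            @ckgen R G lam sk * (~~ is_invalid (@cdec R G lam sk (hat lam)))%:R).

(* A randomized map f : {0,1}^m -> {0,1}^m is given by its transition
   probabilities f x y = Pr[f(x) = y]. *)
Definition tamper (R : realType) (m : nat) := word m -> word m -> R.

Definition indep_tamper (R : realType) (alpha : R) (m : nat) (f : tamper R m) : Prop :=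
  exists g : 'I_m -> bool -> bool -> R,
    (forall i b, is_distr (g i b)) /\
    (forall i b, g i b (~~ b) <= alpha) /\
    (forall x y, f x y = \prod_(i < m) g i (x i) (y i)).

Definition tamper_fail (R : realType) (G : mlcode R) (lam : nat)
    (f : tamper R (clen G lam)) : R :=
  \sum_(sk : ckey G lam) @ckgen R G lam sk *
   \sum_(c : word (clen G lam)) @cenc R G lam sk c *
    \sum_(c' : word (clen G lam)) f c c' *
      ((~~ is_tampered (@cdec R G lam sk c')) && (c' != c))%:R.

Definition tamper_detecting (R : realType) (alpha : R) (G : mlcode R) : Prop :=
  forall f : forall lam, tamper R (clen G lam),
    (forall lam, indep_tamper alpha (f lam)) ->
    negl (fun lam => @tamper_fail R G lam (f lam)).

(** The tampering function that replaces every bit by a fresh uniform bit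
    modifies each coordinate with probability 1/2 <= alpha, so it belongs to
    the family.  Its output c' is uniform and independent of the key and of
    the codeword c.  Whenever c' <> c the decoder must say [tampered] (else
    tampering goes undetected), and [tampered] is not [invalid]; hence
    Pr[undetected] + Pr[Dec(sk, c') <> invalid] >= Pr[c' <> c] >= 1/2.  Since
    c' is uniform, some fixed word does at least as well as c' in the second
    term, and that word violates soundness whenever tamper detection holds. *)
From HB Require Import structures.
From mathcomp Require Import all_boot all_order all_algebra.
From mathcomp Require Import all_classical all_reals.
From mathcomp Require Import exp.
From mathcomp Require Import lra.
Import Order.TTheory GRing.Theory Num.Theory.
Local Open Scope ring_scope.

Section Distributions.
Context {R : realType}.

Lemma distr_sum_const {T : finType} {p : T -> R} (x : R) :
  is_distr p -> \sum_(t : T) p t * x = x.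
Proof. by case=> _ p1; rewrite -mulr_suml p1 mul1r. Qed.

Lemma distr_average_le {T : finType} {p : T -> R} (F : T -> R) :
  is_distr p -> exists t, \sum_(s : T) p s * F s <= F t.
Proof.
move=> [p0 p1]; case: (pickP (@predT T)) => [t0 _ | T0]; last first.
  by move: p1; rewrite big_pred0 // => /eqP; rewrite eq_sym oner_eq0.
case: (arg_maxP F (isT : predT t0)) => tmax _ Fmax.
exists tmax; rewrite -(distr_sum_const (F tmax) (conj p0 p1)).
by apply: ler_sum => s _; apply: ler_wpM2l; [exact: p0 | exact: Fmax].
Qed.

Lemma negl_eventually_le {nu : nat -> R} {eps : R} :
  negl nu -> 0 < eps -> exists N, forall lam, (N <= lam)%N -> nu lam <= eps.
Proof.
move=> nu_negl eps0; have [N HN] := nu_negl 1 ltr01 eps eps0.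
exists (maxn N 1) => lam; rewrite geq_max => /andP[leN lam1].
have inv_le1 : (lam%:R : R) `^ (- 1) <= 1.
  by rewrite powRN powRr1 ?ler0n // invf_le1 ?ler1n ?ltr0n.
apply: le_trans (ler_norm _) (le_trans (HN _ leN) _).
by rewrite -[leRHS]mulr1 ler_wpM2l // ltW.
Qed.

End Distributions.

Section UniformWord.
Variables (R : realType) (m : nat).

Definition uniform_word_prob : R := 2^-1 ^+ m.

Definition uniform_tamper : tamper R m := fun _ _ => uniform_word_prob.

Lemma sum_uniform_word_prob : \sum_(c : word m) uniform_word_prob = 1.
Proof.
rewrite sumr_const card_ffun card_bool card_ord -mulr_natr natrX -exprMn.
by rewrite mulVf ?expr1n ?pnatr_eq0.
Qed.

Lemma uniform_word_prob_distr : is_distr (fun _ : word m => uniform_word_prob).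
Proof.
by split=> [_|]; [rewrite exprn_ge0 ?invr_ge0 | exact: sum_uniform_word_prob].
Qed.

Lemma uniform_word_prob_le_half : (1 <= m)%N -> uniform_word_prob <= 2^-1.
Proof.
rewrite /uniform_word_prob; case: m => // k _.
rewrite exprS -[leRHS]mulr1 ler_wpM2l ?invr_ge0 //.
by rewrite exprn_ile1 ?invr_ge0 // invf_le1 // ler1n.
Qed.

Lemma sum_uniform_word_prob_neq (c : word m) :
  \sum_(c' : word m) uniform_word_prob * (c' != c)%:R = 1 - uniform_word_prob.
Proof.
rewrite -[1 in RHS]sum_uniform_word_prob (bigD1 c) //= eqxx mulr0 add0r.
rewrite [X in _ = X - _](bigD1 c) //= addrAC subrr add0r.
by apply: eq_bigr => c' /negbTE->; rewrite mulr1.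
Qed.

Lemma indep_tamper_uniform (alpha : R) :
  2^-1 <= alpha -> indep_tamper alpha uniform_tamper.
Proof.
move=> half_le; exists (fun _ _ _ => 2^-1); split; [|split] => //.
- move=> i b; split=> [_|]; first by rewrite invr_ge0.
  by rewrite big_bool /= -mulr2n -[LHS]mulr_natr mulVf ?pnatr_eq0.
- by move=> x y; rewrite prodr_const card_ord.
Qed.

End UniformWord.

Section UniformTampering.
Context {R : realType} (G : mlcode R) (lam : nat).

Definition not_invalid_prob (c : word (clen G lam)) : R :=
  \sum_(sk : ckey G lam) @ckgen R G lam sk * (~~ is_invalid (cdec sk c))%:R.

Lemma changed_le_undetected_or_not_invalid (o : outcome) (changed : bool) :
  changed%:R <= ((~~ is_tampered o) && changed)%:R + (~~ is_invalid o)%:R :> R.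
Proof. by case: o; case: changed => /=; lra. Qed.

Lemma uniform_tamper_fail_ge :
  is_distr (@ckgen R G lam) -> (forall sk, is_distr (@cenc R G lam sk)) ->
  1 - uniform_word_prob R (clen G lam) <=
  tamper_fail (uniform_tamper R (clen G lam)) +
  \sum_(c : word (clen G lam))
    uniform_word_prob R (clen G lam) * not_invalid_prob c.
Proof.
move=> kgen_distr enc_distr; set u := uniform_word_prob R _.
have -> : \sum_c u * not_invalid_prob c =
    \sum_sk ckgen sk * \sum_c (@cenc R G lam sk c) *
      \sum_c' u * (~~ is_invalid (cdec sk c'))%:R.
  rewrite /not_invalid_prob; under eq_bigr do rewrite mulr_sumr.
  rewrite exchange_big; apply: eq_bigr => sk _ /=.
  rewrite distr_sum_const // mulr_sumr; apply: eq_bigr => c _.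
  by rewrite mulrCA.
rewrite -(distr_sum_const (1 - u) kgen_distr) /tamper_fail -big_split /=.
apply: ler_sum => sk _; rewrite -mulrDr.
apply: ler_wpM2l; first by case: kgen_distr.
rewrite -(distr_sum_const (1 - u) (enc_distr sk)) -big_split /=.
apply: ler_sum => c _; rewrite -mulrDr.
apply: ler_wpM2l; first by case: (enc_distr sk).
rewrite -(sum_uniform_word_prob_neq _ _ c) -big_split /=.
apply: ler_sum => c' _; rewrite /uniform_tamper -mulrDr.
apply: ler_wpM2l; first by rewrite exprn_ge0 ?invr_ge0.
exact: changed_le_undetected_or_not_invalid.
Qed.

Lemma exists_word_uniform_tamper_fail_ge_half :
  is_distr (@ckgen R G lam) -> (forall sk, is_distr (@cenc R G lam sk)) ->
  (1 <= clen G lam)%N ->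
  exists c, 2^-1 <= tamper_fail (uniform_tamper R (clen G lam)) + not_invalid_prob c.
Proof.
move=> kgen_distr enc_distr clen_pos.
have [c avg_le] :=
  distr_average_le not_invalid_prob (uniform_word_prob_distr R (clen G lam)).
exists c; have := uniform_tamper_fail_ge kgen_distr enc_distr.
by have := uniform_word_prob_le_half R _ clen_pos; lra.
Qed.

End UniformTampering.

Theorem mainTheorem2 (R : realType) (G : mlcode R) (delta : R) :
  well_formed G ->
  (forall lam, (1 <= clen G lam)%N) ->
  0 < delta < 1 ->
  tamper_detecting ((1 + delta) / 2) G ->
  ~ sound G.
Proof.
move=> wf clen_pos /andP[delta0 _] detecting sound_G.
pose f lam := uniform_tamper R (clen G lam).
have f_indep lam : indep_tamper ((1 + delta) / 2) (f lam).
  by apply: indep_tamper_uniform; lra.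
have hat_ex lam : exists c, 2^-1 <= tamper_fail (f lam) + not_invalid_prob G lam c.
  have [kgen_distr enc_distr] := wf lam.
  exact: exists_word_uniform_tamper_fail_ge_half.
pose hat lam := xchoose (hat_ex lam).
have eps0 : (0 : R) < 8^-1 by rewrite invr_gt0.
have [N1 HN1] := negl_eventually_le (detecting f f_indep) eps0.
have [N2 HN2] := negl_eventually_le (sound_G hat) eps0.
pose lam := maxn N1 N2.
have fail_small : tamper_fail (f lam) <= 8^-1 := HN1 lam (leq_maxl _ _).
have accept_small : not_invalid_prob G lam (hat lam) <= 8^-1 :=
  HN2 lam (leq_maxr _ _).
have := xchooseP (hat_ex lam); lra.
Qed.
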